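(* An algebra $(S,\sqcup,\cap)$ with two binary operations is functional (isomorphic to a set of partial functions closed under override and intersection, with the operations interpreted as override and intersection) if and only if it is an ado-semilattice. In particular the functional algebras of signature $(\sqcup,\cap)$ form the finitely axiomatised variety of ado-semilattices.
   Context: For sets $X,Y$, $\mathrm{Par}(X,Y)$ is the set of partial functions from $X$ to $Y$, viewed as sets of ordered pairs. For $f,g\in\mathrm{Par}(X,Y)$, override is $f\sqcup g=f\cup(g-f)$, where $g-f$ is the restriction of $g$ to $X\setminus\mathrm{dom}(f)$; $f\cap g$ is set-theoretic intersection. An algebra $(S,\sqcup,\cap)$ is functional if it is isomorphic to $(A,\sqcup,\cap)$ for some $A\subseteq\mathrm{Par}(X,Y)$ closed under $\sqcup$ and $\cap$. An o-semilattice is an algebra $(L,\cap,\sqcup)$ such that $(L,\cap)$ is a semilattice and, with $x\leq y$ iff $x=x\cap y$, for all $x,y,z$: (i) $x\leq x\sqcup y$; (ii) $(x\cap y)\sqcup(y\cap z)\leq y$; (iii) $x\sqcup y\leq x\sqcup(y\cap(x\sqcup y))$; (iv) $x\cap z\leq(x\cap y)\sqcup z$. It is distributive if $(a\cap d)\sqcup((b\cap d)\cap(c\cap d))=((a\cap d)\sqcup(b\cap d))\cap((a\cap d)\sqcup(c\cap d))$ for all $a,b,c,d$, and associative if $\sqcup$ is associative. An ado-semilattice is an associative distributive o-semilattice. *)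

(** A partial function from X to Y, viewed as a set of ordered pairs:
    a relation [f : X -> Y -> Prop] (f x y <-> (x,y) ∈ f) that is functional. *)
Definition is_partial_fun {X Y : Type} (f : X -> Y -> Prop) : Prop :=
  forall x y1 y2, f x y1 -> f x y2 -> y1 = y2.

Definition pdom {X Y : Type} (f : X -> Y -> Prop) (x : X) : Prop :=
  exists y, f x y.

Definition poverride {X Y : Type} (f g : X -> Y -> Prop) : X -> Y -> Prop :=
  fun x y => f x y \/ (g x y /\ ~ pdom f x).

Definition pinter {X Y : Type} (f g : X -> Y -> Prop) : X -> Y -> Prop :=
  fun x y => f x y /\ g x y.

(** (S, join, meet) is functional: isomorphic to some A ⊆ Par(X,Y) closed under
    ⊔ and ∩.  Equivalently: there is an injective map into Par(X,Y) turning
    join into override and meet into intersection (its image is such an A). *)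
Definition functional {S : Type} (join meet : S -> S -> S) : Prop :=
  exists (X Y : Type) (h : S -> X -> Y -> Prop),
    (forall s, is_partial_fun (h s)) /\
    (forall s t, h s = h t -> s = t) /\
    (forall s t, h (join s t) = poverride (h s) (h t)) /\
    (forall s t, h (meet s t) = pinter (h s) (h t)).

Definition mle {S : Type} (meet : S -> S -> S) (x y : S) : Prop := x = meet x y.

Definition is_semilattice {S : Type} (meet : S -> S -> S) : Prop :=
  (forall x y z, meet x (meet y z) = meet (meet x y) z) /\
  (forall x y, meet x y = meet y x) /\
  (forall x, meet x x = x).

Definition o_semilattice {S : Type} (meet join : S -> S -> S) : Prop :=
  is_semilattice meet /\
  (forall x y, mle meet x (join x y)) /\
  (forall x y z, mle meet (join (meet x y) (meet y z)) y) /\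
  (forall x y, mle meet (join x y) (join x (meet y (join x y)))) /\
  (forall x y z, mle meet (meet x z) (join (meet x y) z)).

Definition distributive_o {S : Type} (meet join : S -> S -> S) : Prop :=
  forall a b c d,
    join (meet a d) (meet (meet b d) (meet c d)) =
    meet (join (meet a d) (meet b d)) (join (meet a d) (meet c d)).

Definition associative_o {S : Type} (join : S -> S -> S) : Prop :=
  forall x y z, join x (join y z) = join (join x y) z.

Definition ado_semilattice {S : Type} (meet join : S -> S -> S) : Prop :=
  o_semilattice meet join /\ distributive_o meet join /\ associative_o join.

(* Soundness is a direct check in Par(X,Y); only axiom (iv) uses that graphs are
   functional.  For completeness, the axioms first yield full left distributivity of
   ⊔ over ∩ and show that x ⊔ y is the least upper bound of any two elements with a
   common upper bound.  The points of the representation are triples (a, c, F) with F a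
   filter containing a and maximal among the filters omitting c (Zorn); such filters
   are prime on bounded joins.  An element s is defined at such a point when s ∈ F or
   s ⊔ a ∉ F, and its value there is its class for s ~ t :<-> s ∩ t defined.  This
   turns ∩ into intersection and ⊔ into override, and a maximal filter containing s
   but not s ∩ t separates s from any t with the same image. *)

From Stdlib Require Import Classical FunctionalExtensionality PropExtensionality.
From mathcomp Require classical_sets.

(** * Partial functions *)

Lemma rel_ext {X Y : Type} (f g : X -> Y -> Prop) :
  (forall x y, f x y <-> g x y) -> f = g.
Proof.
  intros Hfg. apply functional_extensionality; intros x.
  apply functional_extensionality; intros y.
  apply propositional_extensionality, Hfg.
Qed.

Section PartialFunctions.
Context {X Y : Type}.
Implicit Types f g k l : X -> Y -> Prop.

Lemma pinterA f g k : pinter f (pinter g k) = pinter (pinter f g) k.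
Proof. apply rel_ext; unfold pinter; tauto. Qed.

Lemma pinterC f g : pinter f g = pinter g f.
Proof. apply rel_ext; unfold pinter; tauto. Qed.

Lemma pinterxx f : pinter f f = f.
Proof. apply rel_ext; unfold pinter; tauto. Qed.

Lemma poverrideA f g k : poverride f (poverride g k) = poverride (poverride f g) k.
Proof.
  apply rel_ext; intros x y; unfold poverride, pdom.
  assert (dom_override : (exists v, f x v \/ g x v /\ ~ (exists w, f x w)) <->
                         (exists v, f x v) \/ (exists v, g x v)).
  { split.
    - intros [v [Hv | [Hv _]]]; [left | right]; exists v; exact Hv.
    - intros [[v Hv] | [v Hv]].
      + exists v; left; exact Hv.
      + destruct (classic (exists w, f x w)) as [[w Hw] | Nf].
        * exists w; left; exact Hw.
        * exists v; right; split; assumption. }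
  tauto.
Qed.

Lemma le_poverride f g : mle pinter f (poverride f g).
Proof. apply rel_ext; unfold pinter, poverride; tauto. Qed.

Lemma le_poverride_inter f g k : mle pinter (poverride (pinter f g) (pinter g k)) g.
Proof. apply rel_ext; unfold pinter, poverride; tauto. Qed.

Lemma le_poverride_restrict f g :
  mle pinter (poverride f g) (poverride f (pinter g (poverride f g))).
Proof. apply rel_ext; unfold pinter, poverride; tauto. Qed.

Lemma le_pinter_poverride f g k :
  is_partial_fun f -> mle pinter (pinter f k) (poverride (pinter f g) k).
Proof.
  intros f_pf. apply rel_ext; intros x y; unfold pinter, poverride, pdom.
  split; [| tauto].
  intros [Hf Hk]. split; [split; assumption |].
  destruct (classic (g x y)) as [Hg | Ng]; [left; tauto | right; split; [exact Hk |]].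
  intros [v [Hfv Hgv]]. apply Ng. rewrite (f_pf x y v Hf Hfv). exact Hgv.
Qed.

Lemma poverride_pinter_distr f g k l :
  poverride (pinter f l) (pinter (pinter g l) (pinter k l)) =
  pinter (poverride (pinter f l) (pinter g l)) (poverride (pinter f l) (pinter k l)).
Proof. apply rel_ext; unfold pinter, poverride, pdom; firstorder. Qed.

End PartialFunctions.

Lemma functional_ado {S : Type} (join meet : S -> S -> S) :
  functional join meet -> ado_semilattice meet join.
Proof.
  intros (X & Y & h & h_pf & h_inj & h_join & h_meet).
  unfold ado_semilattice, o_semilattice, is_semilattice, distributive_o, associative_o, mle.
  repeat split; intros; apply h_inj; repeat first [rewrite h_join | rewrite h_meet].
  - apply pinterA.
  - apply pinterC.
  - apply pinterxx.
  - apply le_poverride.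
  - apply le_poverride_inter.
  - apply le_poverride_restrict.
  - apply le_pinter_poverride, h_pf.
  - apply poverride_pinter_distr.
  - apply poverrideA.
Qed.

(** * Derived laws *)

Section Representation.
Variables (S : Type) (m j : S -> S -> S).
Local Notation le := (mle m).

Hypothesis meetA : forall x y z, m x (m y z) = m (m x y) z.
Hypothesis meetC : forall x y, m x y = m y x.
Hypothesis meetxx : forall x, m x x = x.
Hypothesis le_join_l : forall x y, le x (j x y).
Hypothesis le_join_meets : forall x y z, le (j (m x y) (m y z)) y.
Hypothesis le_join_restrict : forall x y, le (j x y) (j x (m y (j x y))).
Hypothesis le_meet_join : forall x y z, le (m x z) (j (m x y) z).

Lemma le_refl x : le x x.
Proof. unfold mle. now rewrite meetxx. Qed.

Lemma le_anti x y : le x y -> le y x -> x = y.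
Proof. unfold mle. intros Hxy Hyx. rewrite Hxy, meetC. exact (eq_sym Hyx). Qed.

Lemma le_trans x y z : le x y -> le y z -> le x z.
Proof.
  unfold mle. intros Hxy Hyz.
  rewrite Hxy at 1. rewrite Hyz, meetA, <- Hxy. reflexivity.
Qed.

Lemma le_meet_l x y : le (m x y) x.
Proof. unfold mle. rewrite (meetC (m x y) x), meetA, meetxx. reflexivity. Qed.

Lemma le_meet_r x y : le (m x y) y.
Proof. unfold mle. rewrite <- meetA, meetxx. reflexivity. Qed.

Lemma le_meet z x y : le z x -> le z y -> le z (m x y).
Proof. unfold mle. intros Hx Hy. rewrite meetA, <- Hx. exact Hy. Qed.

Lemma meet_l x y : le x y -> m x y = x.
Proof. intros H. exact (eq_sym H). Qed.

Lemma meet_r x y : le y x -> m x y = y.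
Proof. intros H. rewrite meetC. exact (eq_sym H). Qed.

Lemma le_meet2 x y x' y' : le x x' -> le y y' -> le (m x y) (m x' y').
Proof.
  intros Hx Hy. apply le_meet.
  - exact (le_trans _ _ _ (le_meet_l x y) Hx).
  - exact (le_trans _ _ _ (le_meet_r x y) Hy).
Qed.

Lemma join_least x y z : le x z -> le y z -> le (j x y) z.
Proof.
  intros Hx Hy. generalize (le_join_meets x z y).
  rewrite (meet_l _ _ Hx), (meet_r _ _ Hy). easy.
Qed.

Lemma le_join_r_bounded x y u : le x u -> le y u -> le y (j x y).
Proof.
  intros Hx Hy. generalize (le_meet_join u x y).
  rewrite (meet_r _ _ Hx), (meet_r _ _ Hy). easy.
Qed.

Lemma join_r x y : le x y -> j x y = y.
Proof.
  intros H. apply le_anti.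
  - exact (join_least _ _ _ H (le_refl y)).
  - exact (le_join_r_bounded _ _ _ H (le_refl y)).
Qed.

Lemma join_l x y : le y x -> j x y = x.
Proof.
  intros H. apply le_anti.
  - exact (join_least _ _ _ (le_refl x) H).
  - apply le_join_l.
Qed.

Lemma join_comm_bounded x y u : le x u -> le y u -> j x y = j y x.
Proof.
  intros Hx Hy. apply le_anti; apply join_least;
    eauto using le_join_l, le_join_r_bounded.
Qed.

Lemma join_meet_self x y : j x y = j x (m y (j x y)).
Proof.
  apply le_anti.
  - apply le_join_restrict.
  - apply join_least; [apply le_join_l | apply le_meet_r].
Qed.

Hypothesis joinA : forall x y z, j x (j y z) = j (j x y) z.

Lemma le_join2l x y y' : le y y' -> le (j x y) (j x y').
Proof. intros H. rewrite <- (join_r _ _ H), joinA. apply le_join_l. Qed.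

Hypothesis join_meet_distr_local : forall a b c d,
  j (m a d) (m (m b d) (m c d)) = m (j (m a d) (m b d)) (j (m a d) (m c d)).

Lemma join_meet_distr_bounded x y z u : le x u -> le y u -> le z u ->
  j x (m y z) = m (j x y) (j x z).
Proof.
  intros Hx Hy Hz. generalize (join_meet_distr_local x y z u).
  rewrite <- Hx, <- Hy, <- Hz. easy.
Qed.

Lemma meet_join_distr_bounded x y z u : le x u -> le y u -> le z u ->
  m x (j y z) = j (m x y) (m x z).
Proof.
  intros Hx Hy Hz.
  assert (Hxy : le (m x y) u) by exact (le_trans _ _ _ (le_meet_l x y) Hx).
  rewrite (join_meet_distr_bounded (m x y) x z u Hxy Hx Hz).
  rewrite (join_r _ _ (le_meet_l x y)).
  rewrite (join_comm_bounded (m x y) z u Hxy Hz).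
  rewrite (join_meet_distr_bounded z x y u Hz Hx Hy).
  rewrite meetA, (meet_l _ _ (le_join_r_bounded z x u Hz Hx)).
  now rewrite (join_comm_bounded z y u Hz Hy).
Qed.

Lemma join_meet_distr x y z : j x (m y z) = m (j x y) (j x z).
Proof.
  apply le_anti.
  { apply le_meet; apply le_join2l; [apply le_meet_l | apply le_meet_r]. }
  set (M := m (j x y) (j x z)).
  set (y' := m y (j x y)). set (z' := m z (j x z)).
  assert (M_split_y : j (m M x) (m M y') = M).
  { rewrite <- (meet_join_distr_bounded M x y' (j x y));
      [| apply le_meet_l | apply le_join_l | apply le_meet_r].
    unfold y'. rewrite <- join_meet_self. apply meet_l, le_meet_l. }
  assert (M_split_z : j (m M x) (m M z') = M).
  { rewrite <- (meet_join_distr_bounded M x z' (j x z));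
      [| apply le_meet_r | apply le_join_l | apply le_meet_r].
    unfold z'. rewrite <- join_meet_self. apply meet_l, le_meet_r. }
  assert (M_split : j (m M x) (m (m M y') (m M z')) = M).
  { rewrite (join_meet_distr_bounded (m M x) (m M y') (m M z') M) by apply le_meet_l.
    rewrite M_split_y, M_split_z. apply meetxx. }
  rewrite <- M_split. apply join_least.
  - exact (le_trans _ _ _ (le_meet_r M x) (le_join_l x _)).
  - set (W := m (m M y') (m M z')).
    assert (W_y' : le W y') by exact (le_trans _ _ _ (le_meet_l _ _) (le_meet_r _ _)).
    assert (W_z' : le W z') by exact (le_trans _ _ _ (le_meet_r _ _) (le_meet_r _ _)).
    assert (W_yz : le W (m y z)).
    { apply le_meet; [exact (le_trans _ _ _ W_y' (le_meet_l _ _))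
                     | exact (le_trans _ _ _ W_z' (le_meet_l _ _))]. }
    apply le_trans with (y := j x W).
    + apply (le_join_r_bounded x W (j x y)); [apply le_join_l |].
      exact (le_trans _ _ _ W_y' (le_meet_r _ _)).
    + apply le_join2l, W_yz.
Qed.

Lemma le_join_meetl x y w : le x (j y w) -> le x (j (m x y) w).
Proof.
  intros Hx. set (w' := m w (j y w)).
  assert (E : j y w = j y w') by apply join_meet_self.
  rewrite E in Hx.
  assert (Hw' : le w' (j y w')) by (rewrite <- E; apply le_meet_r).
  apply le_trans with (y := m x (j y w')); [rewrite <- Hx; apply le_refl |].
  rewrite (meet_join_distr_bounded x y w' (j y w') Hx (le_join_l y w') Hw').
  apply le_join2l. exact (le_trans _ _ _ (le_meet_r x w') (le_meet_l w (j y w))).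
Qed.

(* In Par(X,Y), [agree d e] is the part of d on which e is undefined or equal to d. *)
Definition agree d e := m d (j e d).

Lemma le_agree_l d e : le (agree d e) d.
Proof. apply le_meet_l. Qed.

Lemma le_agree d e e' : le e e' -> le (agree d e') (agree d e).
Proof.
  intros He. apply le_meet; [apply le_agree_l |].
  apply le_trans with (y := j e (agree d e')).
  - apply (le_join_r_bounded e (agree d e') (j e' d)); [| apply le_meet_r].
    exact (le_trans _ _ _ He (le_join_l e' d)).
  - apply le_join2l, le_agree_l.
Qed.

(* In Par(X,Y): wherever p and q both differ from d they are defined and, being
   below s, equal, so p ∩ q ≤ d makes them equal to d there. *)
Lemma le_join_agree p q s d : le p s -> le q s -> le (m p q) d ->
  le d (j (agree d p) (agree d q)).
Proof.
  intros Hp Hq Hpq. set (P := agree d p). set (q1 := m q (j P q)).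
  assert (Hq1s : le q1 s) by exact (le_trans _ _ _ (le_meet_l _ _) Hq).
  assert (q1_le : le q1 (j p (j d q))).
  { replace (j p (j d q)) with (j p (j P q)).
    - apply le_trans with (y := j p q1).
      + exact (le_join_r_bounded _ _ _ Hp Hq1s).
      + apply le_join2l, le_meet_r.
    - rewrite !joinA. unfold P, agree. rewrite <- join_meet_self. reflexivity. }
  assert (q1_le_dq : le q1 (j d q)).
  { apply le_join_meetl in q1_le. rewrite join_r in q1_le; [exact q1_le |].
    apply le_trans with (y := d); [| apply le_join_l].
    apply le_trans with (y := m p q); [| exact Hpq].
    apply le_meet; [apply le_meet_r | exact (le_trans _ _ _ (le_meet_l _ _) (le_meet_l _ _))]. }
  assert (Pq_le : le (j P q) (j d q)).
  { rewrite join_meet_self. apply join_least; [| exact q1_le_dq].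
    exact (le_trans _ _ _ (le_agree_l d p) (le_join_l d q)). }
  assert (d_le : le d (j (j P q) d)).
  { generalize (le_meet_join (j d q) (j P q) d).
    rewrite (meet_r _ _ (le_join_l d q)), (meet_r _ _ Pq_le). easy. }
  replace (j P (agree d q)) with (m d (j (j P q) d)).
  - exact (le_meet _ _ _ (le_refl d) d_le).
  - unfold agree. rewrite join_meet_distr, joinA, (join_r P d (le_agree_l d p)).
    reflexivity.
Qed.

(** * Maximal filters *)

Record is_filter (F : S -> Prop) : Prop := {
  filter_up : forall x y, F x -> le x y -> F y;
  filter_meet : forall x y, F x -> F y -> F (m x y) }.

Record maximal_filter (a c : S) (F : S -> Prop) : Prop := {
  mf_filter : is_filter F;
  mf_top : F a;
  mf_bot : ~ F c;
  mf_max : forall x, ~ F x -> exists2 g, F g & le (m g x) c }.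

Section MaximalFilter.
Variables (a c : S) (F : S -> Prop).
Hypothesis F_max : maximal_filter a c F.
Let F_up := filter_up _ (mf_filter _ _ _ F_max).
Let F_meet := filter_meet _ (mf_filter _ _ _ F_max).
Let F_a := mf_top _ _ _ F_max.

Lemma filter_join_or_bounded x y u : le x u -> le y u -> F (j x y) -> F x \/ F y.
Proof.
  intros Hx Hy Fxy. apply NNPP; intros N.
  destruct (mf_max _ _ _ F_max x) as [gx Fgx Hgx]; [tauto |].
  destruct (mf_max _ _ _ F_max y) as [gy Fgy Hgy]; [tauto |].
  set (g := m (m gx gy) (j x y)).
  assert (Hg : le g (j x y)) by apply le_meet_r.
  assert (Hgu : le g u) by exact (le_trans _ _ _ Hg (join_least _ _ _ Hx Hy)).
  apply (mf_bot _ _ _ F_max), (F_up g); [apply F_meet; [apply F_meet |]; assumption |].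
  rewrite <- (meet_l _ _ Hg), (meet_join_distr_bounded g x y u Hgu Hx Hy).
  apply join_least.
  - apply le_trans with (y := m gx x); [| exact Hgx].
    apply le_meet2; [exact (le_trans _ _ _ (le_meet_l _ _) (le_meet_l _ _)) | apply le_refl].
  - apply le_trans with (y := m gy y); [| exact Hgy].
    apply le_meet2; [exact (le_trans _ _ _ (le_meet_l _ _) (le_meet_r _ _)) | apply le_refl].
Qed.

Lemma filter_join_agree x y : F (j x y) -> F x \/ F (agree y x).
Proof.
  intros Fxy. rewrite join_meet_self in Fxy.
  exact (filter_join_or_bounded _ _ (j x y) (le_join_l x y) (le_meet_r _ _) Fxy).
Qed.

Lemma filter_join_or x y : F (j x y) -> F x \/ F y.
Proof.
  intros Fxy. destruct (filter_join_agree x y Fxy) as [Fx | Fy].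
  - left. exact Fx.
  - right. exact (F_up _ _ Fy (le_agree_l _ _)).
Qed.

(* When F is the set of partial functions agreeing with a at a point x of dom a,
   [defined s] says exactly that x ∈ dom s. *)
Definition defined s := F s \/ ~ F (j s a).

Lemma undefined_inv s : ~ defined s -> ~ F s /\ F (j s a).
Proof. unfold defined. intros N. split; [tauto |]. apply NNPP. tauto. Qed.

Lemma filter_agree_undefined s : ~ defined s -> F (agree a s).
Proof.
  intros N. apply undefined_inv in N as [Ns Fsa].
  destruct (filter_join_agree _ _ Fsa); tauto.
Qed.

Lemma defined_le s s' : defined s -> le s s' -> defined s'.
Proof.
  intros [Fs | Nsa] Hs; [left; exact (F_up _ _ Fs Hs) |].
  apply NNPP; intros N. apply Nsa.
  apply (F_up _ _ (filter_agree_undefined _ N)).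
  exact (le_trans _ _ _ (le_agree _ _ _ Hs) (le_meet_r _ _)).
Qed.

Lemma filter_defined_le s q : F s -> le q s -> defined q -> F q.
Proof.
  intros Fs Hq [Fq | Nqa]; [exact Fq |]. exfalso. apply Nqa.
  apply (F_up (m s a)); [exact (F_meet _ _ Fs F_a) |].
  generalize (le_meet_join s q a). rewrite (meet_r _ _ Hq). easy.
Qed.

Lemma filter_join_undefined s t : ~ defined s -> F t -> F (j s t).
Proof.
  intros N Ft. pose proof (undefined_inv _ N) as [_ Fsa].
  apply (F_up (m (agree a s) t)); [exact (F_meet _ _ (filter_agree_undefined _ N) Ft) |].
  apply le_trans with (y := j s (m (agree a s) t)).
  - apply (le_join_r_bounded _ _ (j s a)); [apply le_join_l |].
    exact (le_trans _ _ _ (le_meet_l _ _) (le_meet_r _ _)).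
  - apply le_join2l, le_meet_r.
Qed.

Lemma defined_meet_bounded p q s : le p s -> le q s -> defined p -> defined q ->
  defined (m p q).
Proof.
  intros Hp Hq Dp Dq.
  destruct (classic (F p)) as [Fp | Np].
  { left. apply F_meet; [exact Fp |].
    exact (filter_defined_le _ _ (F_up _ _ Fp Hp) Hq Dq). }
  destruct (classic (F q)) as [Fq | Nq].
  { left. apply F_meet; [| exact Fq].
    exact (filter_defined_le _ _ (F_up _ _ Fq Hq) Hp Dp). }
  set (r := m p q). right. intros Fra.
  assert (Nr : ~ defined r).
  { intros [Fr | Nra]; [exact (Np (F_up _ _ Fr (le_meet_l p q))) | exact (Nra Fra)]. }
  set (w := agree a r). set (d := j r w).
  assert (Fd : F d).
  { apply (F_up w); [exact (filter_agree_undefined _ Nr) |].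
    apply (le_join_r_bounded r w (j r a)); [apply le_join_l | apply le_meet_r]. }
  assert (agree_d : forall e, le r e -> F (agree d e) -> F (j e a)).
  { intros e He Fde. apply (F_up _ _ Fde).
    apply le_trans with (y := j e d); [apply le_meet_r |].
    unfold d. rewrite joinA, (join_l _ _ He). apply le_join2l, le_agree_l. }
  assert (Fpq : F (j (agree d p) (agree d q))).
  { exact (F_up _ _ Fd (le_join_agree p q s d Hp Hq (le_join_l r w))). }
  destruct Dp as [| Npa]; [contradiction |]. destruct Dq as [| Nqa]; [contradiction |].
  destruct (filter_join_or_bounded _ _ d (le_agree_l _ _) (le_agree_l _ _) Fpq)
    as [Fdp | Fdq].
  - exact (Npa (agree_d p (le_meet_l p q) Fdp)).
  - exact (Nqa (agree_d q (le_meet_r p q) Fdq)).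
Qed.

Lemma defined_meet_trans s t u : defined (m s t) -> defined (m t u) -> defined (m s u).
Proof.
  intros Dst Dtu. rewrite meetC in Dst.
  apply (defined_le (m (m t s) (m t u))).
  - exact (defined_meet_bounded _ _ t (le_meet_l _ _) (le_meet_l _ _) Dst Dtu).
  - apply le_meet2; apply le_meet_r.
Qed.

Lemma defined_join s t : defined (j s t) -> defined s \/ defined t.
Proof.
  intros Dst. apply NNPP; intros N.
  assert (Ns : ~ defined s) by tauto. assert (Nt : ~ defined t) by tauto.
  destruct Dst as [Fst | Nsta].
  - destruct (filter_join_or _ _ Fst) as [Fs | Ft];
      [apply Ns; left; exact Fs | apply Nt; left; exact Ft].
  - apply Nsta. rewrite <- joinA.
    exact (filter_join_undefined _ _ Ns (proj2 (undefined_inv _ Nt))).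
Qed.

Lemma defined_join_l s t : defined s -> defined (j s t).
Proof. intros Ds. exact (defined_le _ _ Ds (le_join_l s t)). Qed.

Lemma defined_join_r s t : defined t -> defined (j s t).
Proof.
  intros Dt. apply NNPP; intros N.
  pose proof (undefined_inv _ N) as [Nst Fsta].
  destruct (classic (F t)) as [Ft | Nt].
  - apply Nst. generalize (filter_join_undefined _ _ N Ft).
    rewrite <- joinA, (join_r t t (le_refl t)). easy.
  - destruct Dt as [| Nta]; [contradiction |].
    rewrite <- joinA in Fsta.
    destruct (filter_join_or _ _ Fsta) as [Fs | Fta]; [| exact (Nta Fta)].
    exact (Nst (F_up _ _ Fs (le_join_l s t))).
Qed.

Lemma defined_join_meet_r s t : ~ defined s -> defined t -> defined (m (j s t) t).
Proof.
  intros Ns Dt. pose proof (undefined_inv _ Ns) as [Ns' _].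
  destruct (classic (F t)) as [Ft | Nt].
  { left. exact (F_meet _ _ (filter_join_undefined _ _ Ns Ft) Ft). }
  destruct Dt as [| Nta]; [contradiction |]. right. intros Fa'.
  generalize (filter_join_undefined _ _ Ns Fa').
  rewrite joinA, (meetC (j s t) t), <- join_meet_self, <- joinA. intros Fsta.
  destruct (filter_join_or _ _ Fsta) as [Fs | Fta]; [exact (Ns' Fs) | exact (Nta Fta)].
Qed.

Lemma undefined_bot : le c a -> ~ defined c.
Proof.
  intros Hca [Fc | Nca]; [exact (mf_bot _ _ _ F_max Fc) |].
  apply Nca. rewrite (join_r _ _ Hca). exact F_a.
Qed.

End MaximalFilter.

Lemma ex_maximal_filter a c : ~ le a c -> exists F, maximal_filter a c F.
Proof.
  intros Nac.
  set (P := fun X : S -> Prop => is_filter X /\ ~ X c /\ forall x, X x -> X a).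
  destruct (@classical_sets.Zorn_bigcup S P) as [M [[M_filter [Mc M_a]] M_max]].
  { intros C C_P C_chain. split; [split |]; [| | split].
    - intros x y [X CX Xx] Hxy. exists X; [exact CX |].
      exact (filter_up _ (proj1 (C_P X CX)) x y Xx Hxy).
    - intros x y [X CX Xx] [Y CY Yy].
      destruct (C_chain X Y CX CY) as [XY | YX].
      + exists Y; [exact CY |]. apply (filter_meet _ (proj1 (C_P Y CY))); auto.
      + exists X; [exact CX |]. apply (filter_meet _ (proj1 (C_P X CX))); auto.
    - intros [X CX Xc]. exact (proj1 (proj2 (C_P X CX)) Xc).
    - intros x [X CX Xx]. exists X; [exact CX |]. exact (proj2 (proj2 (C_P X CX)) x Xx). }
  assert (Ma : M a).
  { apply NNPP; intros Na. apply (M_max (fun x => le a x)).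
    - split; [intros x Mx; exfalso; exact (Na (M_a x Mx)) |].
      intros Hsub. exact (Na (Hsub a (le_refl a))).
    - split; [split |]; [| | split].
      + intros x y Hx Hxy. exact (le_trans _ _ _ Hx Hxy).
      + intros x y Hx Hy. exact (le_meet _ _ _ Hx Hy).
      + exact Nac.
      + intros _ _. apply le_refl. }
  exists M. split; [exact M_filter | exact Ma | exact Mc |].
  intros x Nx. apply NNPP; intros N.
  set (B := fun y => exists2 g, M g & le (m g x) y).
  apply (M_max B).
  - split; [intros y My; exists y; [exact My | apply le_meet_l] |].
    intros Hsub. apply Nx, Hsub. exists a; [exact Ma | apply le_meet_r].
  - split; [split |]; [| | split].
    + intros y z [g Mg Hg] Hyz. exists g; [exact Mg | exact (le_trans _ _ _ Hg Hyz)].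
    + intros y z [g Mg Hg] [g' Mg' Hg']. exists (m g g').
      * exact (filter_meet _ M_filter _ _ Mg Mg').
      * apply le_meet.
        -- apply le_trans with (y := m g x); [| exact Hg].
           apply le_meet2; [apply le_meet_l | apply le_refl].
        -- apply le_trans with (y := m g' x); [| exact Hg'].
           apply le_meet2; [apply le_meet_r | apply le_refl].
    + intros [g Mg Hg]. exact (N (ex_intro2 _ _ g Mg Hg)).
    + intros _ _. exists a; [exact Ma | apply le_meet_l].
Qed.

(** * The representation *)

Record point := Point {
  pt_a : S;
  pt_c : S;
  pt_F : S -> Prop;
  pt_max : maximal_filter pt_a pt_c pt_F }.

Definition defined_at (p : point) : S -> Prop := defined (pt_a p) (pt_F p).

Definition value (p : point) (s : S) : S -> Prop := fun t => defined_at p (m s t).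

Definition rep (s : S) : point -> (S -> Prop) -> Prop :=
  fun p v => defined_at p s /\ v = value p s.

Lemma value_eq p s t : defined_at p (m s t) -> value p s = value p t.
Proof.
  intros Dst. apply functional_extensionality; intros u.
  apply propositional_extensionality. unfold value, defined_at in *. split; intros Du.
  - rewrite meetC in Dst. exact (defined_meet_trans _ _ _ (pt_max p) _ _ _ Dst Du).
  - exact (defined_meet_trans _ _ _ (pt_max p) _ _ _ Dst Du).
Qed.

Lemma value_self p s : defined_at p s -> value p s s.
Proof. unfold value. now rewrite meetxx. Qed.

Lemma rep_partial s : is_partial_fun (rep s).
Proof. intros p v1 v2 [_ ->] [_ ->]. reflexivity. Qed.

Lemma dom_rep s p : pdom (rep s) p <-> defined_at p s.
Proof.
  split; [intros [v [Ds _]]; exact Ds |].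
  intros Ds. exists (value p s). split; [exact Ds | reflexivity].
Qed.

Lemma rep_meet s t : rep (m s t) = pinter (rep s) (rep t).
Proof.
  apply rel_ext; intros p v. unfold rep, pinter, defined_at. split.
  - intros [Dst ->].
    pose proof (defined_le _ _ _ (pt_max p) _ _ Dst (le_meet_l s t)) as Ds.
    pose proof (defined_le _ _ _ (pt_max p) _ _ Dst (le_meet_r s t)) as Dt.
    split; split; [exact Ds | | exact Dt |]; apply value_eq.
    + rewrite meetC, (meet_r _ _ (le_meet_l s t)). exact Dst.
    + rewrite meetC, (meet_r _ _ (le_meet_r s t)). exact Dst.
  - intros [[Ds ->] [Dt Est]].
    assert (Dst : defined_at p (m s t)).
    { rewrite meetC. unfold defined_at. change (value p t s). rewrite <- Est.
      exact (value_self _ _ Ds). }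
    split; [exact Dst |]. symmetry. apply value_eq.
    rewrite meetC, (meet_r _ _ (le_meet_l s t)). exact Dst.
Qed.

Lemma rep_join s t : rep (j s t) = poverride (rep s) (rep t).
Proof.
  apply rel_ext; intros p v. unfold poverride. rewrite dom_rep.
  unfold rep, defined_at. pose proof (pt_max p) as Hp.
  assert (E_s : defined_at p s -> value p (j s t) = value p s).
  { intros Ds. apply value_eq. unfold defined_at.
    rewrite (meet_r _ _ (le_join_l s t)). exact Ds. }
  assert (E_t : ~ defined_at p s -> defined_at p t -> value p (j s t) = value p t).
  { intros Ns Dt. apply value_eq. exact (defined_join_meet_r _ _ _ Hp _ _ Ns Dt). }
  split.
  - intros [Dst ->]. destruct (classic (defined_at p s)) as [Ds | Ns].
    + left. split; [exact Ds | exact (E_s Ds)].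
    + destruct (defined_join _ _ _ Hp _ _ Dst) as [Ds | Dt]; [contradiction |].
      right. split; [split; [exact Dt | exact (E_t Ns Dt)] | exact Ns].
  - intros [[Ds ->] | [[Dt ->] Ns]].
    + split; [exact (defined_join_l _ _ _ Hp _ _ Ds) | symmetry; exact (E_s Ds)].
    + split; [exact (defined_join_r _ _ _ Hp _ _ Dt) | symmetry; exact (E_t Ns Dt)].
Qed.

Lemma rep_le s t : rep s = rep t -> le s t.
Proof.
  intros E. apply NNPP; intros Nst.
  assert (Ns : ~ le s (m s t)).
  { intros H. exact (Nst (le_trans _ _ _ H (le_meet_r s t))). }
  destruct (ex_maximal_filter _ _ Ns) as [F F_max].
  set (p := Point s (m s t) F F_max).
  assert (Ds : defined_at p s) by (left; exact (mf_top _ _ _ F_max)).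
  assert (rep_t : rep t p (value p s)) by (rewrite <- E; split; [exact Ds | reflexivity]).
  destruct rep_t as [_ Est].
  apply (undefined_bot _ _ _ F_max (le_meet_l s t)).
  rewrite meetC. change (value p t s). rewrite <- Est. exact (value_self _ _ Ds).
Qed.

Lemma ado_functional : functional j m.
Proof.
  exists point, (S -> Prop), rep. split; [| split; [| split]].
  - exact rep_partial.
  - intros s t E. apply le_anti; apply rep_le; [exact E | exact (eq_sym E)].
  - exact rep_join.
  - exact rep_meet.
Qed.

End Representation.

Theorem theorem4p10 (S : Type) (join meet : S -> S -> S) :
  functional join meet <-> ado_semilattice meet join.
Proof.
  split; [exact (functional_ado join meet) |].
  intros [[[meetA [meetC meetxx]] [o1 [o2 [o3 o4]]]] [distr joinA]].
  exact (ado_functional S meet join meetA meetC meetxx o1 o2 o3 o4 joinA distr).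
Qed.
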